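(* Let $p\ge1$, $m=2p$, $j=\mathrm{diag}(I_p,-I_p)$, $n>0$. Let $A$ be an $n\times n$ matrix with $\det A\neq0$, $S_0=S_0^*$ an $n\times n$ matrix and $\Pi_0$ an $n\times m$ matrix with $AS_0-S_0A^*=i\Pi_0j\Pi_0^*$. Define for $k\ge0$ $$\Pi_{k+1}=\Pi_k+iA^{-1}\Pi_kj,\qquad S_{k+1}=S_k+A^{-1}S_k(A^* )^{-1}+A^{-1}\Pi_k\Pi_k^*(A^* )^{-1}.$$ Suppose $\det S_r\neq0$ for $0\le r\le N$. Then the matrices $C_k=I_m+\Pi_k^*S_k^{-1}\Pi_k-\Pi_{k+1}^*S_{k+1}^{-1}\Pi_{k+1}$, $0\le k<N$, satisfy $C_k=C_k^*$ and $C_kjC_k=j$.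
   Context: $I_r$ denotes the $r\times r$ identity matrix. *)

From HB Require Import structures.
From mathcomp Require Import all_boot all_order all_algebra.
From mathcomp Require Import all_reals.
From mathcomp.real_closed Require Import complex.
Set Implicit Arguments. Unset Strict Implicit. Unset Printing Implicit Defensive.
Import Order.TTheory GRing.Theory Num.Theory.
Local Open Scope ring_scope.

Definition adj {C : numClosedFieldType} {m n : nat} (M : 'M[C]_(m, n)) : 'M[C]_(n, m) :=
  (map_mx Num.conj M)^T.

Definition Jmx {C : numClosedFieldType} (p : nat) : 'M[C]_(p + p) :=
  block_mx 1%:M 0 0 (- 1%:M).

Fixpoint Pi_seq {C : numClosedFieldType} (n p : nat) (A : 'M[C]_n)
   (Pi0 : 'M[C]_(n, p + p)) (k : nat) : 'M[C]_(n, p + p) :=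
  match k with
  | 0 => Pi0
  | k'.+1 => let P := Pi_seq A Pi0 k' in
             P + 'i *: (invmx A *m P *m Jmx p)
  end.

Fixpoint S_seq {C : numClosedFieldType} (n p : nat) (A : 'M[C]_n) (S0 : 'M[C]_n)
   (Pi0 : 'M[C]_(n, p + p)) (k : nat) : 'M[C]_n :=
  match k with
  | 0 => S0
  | k'.+1 => let S := S_seq A S0 Pi0 k' in
             let P := Pi_seq A Pi0 k' in
             S + invmx A *m S *m invmx (adj A)
               + invmx A *m (P *m adj P) *m invmx (adj A)
  end.

Definition C_mx {C : numClosedFieldType} (n p : nat) (A : 'M[C]_n) (S0 : 'M[C]_n)
   (Pi0 : 'M[C]_(n, p + p)) (k : nat) : 'M[C]_(p + p) :=
  1%:M + adj (Pi_seq A Pi0 k) *m invmx (S_seq A S0 Pi0 k) *m Pi_seq A Pi0 k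
   - adj (Pi_seq A Pi0 k.+1) *m invmx (S_seq A S0 Pi0 k.+1) *m Pi_seq A Pi0 k.+1.

From HB Require Import structures.
From mathcomp Require Import all_boot all_order all_algebra.
From mathcomp Require Import all_reals.
From mathcomp.real_closed Require Import complex.
From mathcomp Require Import ring.
Set Implicit Arguments. Unset Strict Implicit. Unset Printing Implicit Defensive.
Import Order.TTheory GRing.Theory Num.Theory.
Local Open Scope ring_scope.

(* One step (S, Pi) |-> (S', Pi') of the recursion preserves the operator identity
   A S - S A^* = i Pi j Pi^*, so it holds for every k.  Sandwiched between S^-1 and
   S^-1 it gives S^-1 Pi j Pi^* S^-1 = -i (S^-1 A - A^* S^-1), likewise for S'; the
   mixed identity A S' - S A^* - S B^* = i Pi j Pi'^* (B = A^-1), sandwiched between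
   S^-1 and S'^-1, gives a similar formula for S^-1 Pi j Pi'^* S'^-1.  Writing
   C = I + G, the relation C j C = j amounts to G j G = -(G j + j G); expanding
   G j G with these three identities and A (Pi' - Pi) = i Pi j leaves exactly
   -(G j + j G). *)

Section Adjoint.

Variable C : numClosedFieldType.

Lemma adjM m n k (M : 'M[C]_(m, n)) (N : 'M[C]_(n, k)) : adj (M *m N) = adj N *m adj M.
Proof. by rewrite /adj map_mxM trmx_mul. Qed.

Lemma adjD m n (M N : 'M[C]_(m, n)) : adj (M + N) = adj M + adj N.
Proof. by rewrite /adj map_mxD linearD. Qed.

Lemma adjN m n (M : 'M[C]_(m, n)) : adj (- M) = - adj M.
Proof. by rewrite /adj map_mxN linearN. Qed.

Lemma adjB m n (M N : 'M[C]_(m, n)) : adj (M - N) = adj M - adj N.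
Proof. by rewrite adjD adjN. Qed.

Lemma adjZ m n (a : C) (M : 'M[C]_(m, n)) : adj (a *: M) = a^* *: adj M.
Proof. by apply/matrixP => i j; rewrite !mxE rmorphM. Qed.

Lemma adjK m n (M : 'M[C]_(m, n)) : adj (adj M) = M.
Proof. by apply/matrixP => i j; rewrite !mxE conjCK. Qed.

Lemma adj1 n : adj (1%:M : 'M[C]_n) = 1%:M.
Proof. by rewrite /adj map_mx1 trmx1. Qed.

Lemma adj_invmx n (M : 'M[C]_n) : adj (invmx M) = invmx (adj M).
Proof. by rewrite /adj map_invmx trmx_inv. Qed.

Lemma adj_Jmx p : adj (Jmx p : 'M[C]_(p + p)) = Jmx p.
Proof.
rewrite /adj /Jmx map_block_mx tr_block_mx map_mxN linearN !map_mx1 !trmx1.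
by congr block_mx; apply/matrixP => i j; rewrite !mxE ?conjC0 // eq_sym.
Qed.

Lemma mulmx_Jmx p : (Jmx p : 'M[C]_(p + p)) *m Jmx p = 1%:M.
Proof.
rewrite /Jmx mulmx_block !mulmx0 !mul0mx !addr0 !add0r mulmx1 mulmxN mulmx1 opprK.
by rewrite -scalar_mx_block.
Qed.

End Adjoint.

Ltac mx_expand := repeat progress
  rewrite ?mulmxDl ?mulmxDr ?mulmxBl ?mulmxBr ?mulmxN ?mulNmx -?scalemxAl -?scalemxAr
          ?mulmxA ?scalerA ?scalerDr ?scalerBr ?scaleNr ?scalerN ?opprD ?opprK
          ?mulCii ?mulrN ?mulNr ?mulN1r ?mulrN1 ?mul1r ?mulr1 ?scaleN1r ?scale1r
          ?mul1mx ?mulmx1.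

(* After expansion the goal is linear in the remaining products, which can thus be
   treated as atoms and the identity checked entrywise. *)
Ltac mx_linear :=
  repeat match goal with
  | |- context [?M *m ?N] => let t := fresh "t" in set t := M *m N; clearbody t
  end;
  apply/matrixP => i j; rewrite !mxE; ring.

Definition op_identity {C : numClosedFieldType} {n m : nat}
    (A : 'M[C]_n) (J : 'M[C]_m) (S : 'M[C]_n) (P : 'M[C]_(n, m)) : Prop :=
  A *m S - S *m adj A = 'i *: (P *m J *m adj P).

Lemma sandwich_invmx (C : numClosedFieldType) n m (A A' S T : 'M[C]_n)
    (P P' : 'M[C]_(n, m)) (J : 'M[C]_m) :
  S \in unitmx -> T \in unitmx ->
  A *m T - S *m A' = 'i *: (P *m J *m adj P') ->
  invmx S *m P *m J *m adj P' *m invmx T = - 'i *: (invmx S *m A - A' *m invmx T).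
Proof.
move=> uS uT opST.
have -> : invmx S *m A - A' *m invmx T = invmx S *m (A *m T - S *m A') *m invmx T.
  rewrite mulmxBr mulmxBl !mulmxA -(mulmxA _ T) mulmxV // mulmx1.
  by rewrite mulVmx // mul1mx.
by rewrite opST -scalemxAr -scalemxAl scalerA mulNr mulCii opprK scale1r !mulmxA.
Qed.

Lemma J_unitary_1D (C : numClosedFieldType) m (G J : 'M[C]_m) :
  G *m J *m G = - (G *m J + J *m G) -> (1%:M + G) *m J *m (1%:M + G) = J.
Proof.
move=> GJG; rewrite mulmxDr mulmx1 !mulmxDl mul1mx GJG.
by rewrite addrA -(addrA J) addrK.
Qed.

Section Step.

Variables (C : numClosedFieldType) (n m : nat) (A B : 'M[C]_n) (J : 'M[C]_m).
Hypotheses (mulAB : A *m B = 1%:M) (mulBA : B *m A = 1%:M).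
Hypotheses (adjJ : adj J = J) (mulJJ : J *m J = 1%:M).

Definition next_Pi (P : 'M[C]_(n, m)) := P + 'i *: (B *m P *m J).

Definition next_S (S : 'M[C]_n) (P : 'M[C]_(n, m)) :=
  S + B *m S *m adj B + B *m (P *m adj P) *m adj B.

Lemma adj_next_S S P : adj S = S -> adj (next_S S P) = next_S S P.
Proof. by move=> adjS; rewrite /next_S !adjD !adjM !adjK adjS -!mulmxA. Qed.

Lemma mulmx_adjBA : adj B *m adj A = 1%:M.
Proof. by rewrite -adjM mulAB adj1. Qed.

Lemma op_identity_next S P :
  op_identity A J S P -> op_identity A J (next_S S P) (next_Pi P).
Proof.
rewrite /op_identity => opS.
have conjB : S *m adj B - B *m S = 'i *: (B *m P *m J *m adj P *m adj B).
  have -> : S *m adj B - B *m S = B *m (A *m S - S *m adj A) *m adj B.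
    rewrite mulmxBr mulmxBl !mulmxA mulBA mul1mx -!mulmxA -adjM mulBA adj1.
    by rewrite mulmx1.
  by rewrite opS -scalemxAr -scalemxAl !mulmxA.
rewrite /next_S /next_Pi !adjD !adjZ !adjM adjJ conjCi.
mx_expand; rewrite ?mulAB ?mulmx_adjBA ?mulmx1 ?mul1mx -?(mulmxA _ J J) ?mulJJ.
mx_expand; rewrite -!(mulmxA _ (adj B) (adj A)) mulmx_adjBA !mulmx1 -opS -conjB.
by mx_linear.
Qed.

Lemma op_identity_mixed S P :
  op_identity A J S P ->
  A *m next_S S P - S *m (adj A + adj B) = 'i *: (P *m J *m adj (next_Pi P)).
Proof.
rewrite /op_identity /next_S /next_Pi => opS.
rewrite !adjD !adjZ !adjM adjJ conjCi.
mx_expand; rewrite ?mulAB ?mul1mx -?(mulmxA _ J J) ?mulJJ.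
mx_expand; rewrite -opS.
by mx_linear.
Qed.

Lemma J_step_quadratic (X Y : 'M[C]_n) (P : 'M[C]_(n, m)) :
  let Q := next_Pi P in
  adj X = X -> adj Y = Y ->
  X *m P *m J *m adj P *m X = - 'i *: (X *m A - adj A *m X) ->
  Y *m Q *m J *m adj Q *m Y = - 'i *: (Y *m A - adj A *m Y) ->
  X *m P *m J *m adj Q *m Y = - 'i *: (X *m A - (adj A + adj B) *m Y) ->
  let G := adj P *m X *m P - adj Q *m Y *m Q in
  G *m J *m G = - (G *m J + J *m G).
Proof.
move=> Q adjX adjY idX idY idXY G.
have idYX : Y *m Q *m J *m adj P *m X = 'i *: (adj A *m X - Y *m (A + B)).
  move: (congr1 adj idXY); rewrite !(adjM, adjZ, adjB, adjD) !adjK adjX adjY adjJ.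
  by rewrite conjCK -/(next_Pi P) -/Q raddfN /= conjCi opprK !mulmxA.
have AQ k (Z : 'M_(k, n)) : Z *m A *m Q = Z *m A *m P + 'i *: (Z *m P *m J).
  by rewrite /Q /next_Pi mulmxDr -scalemxAr !mulmxA -(mulmxA Z A B) mulAB mulmx1.
have QJ k (Z : 'M_(k, n)) : Z *m Q *m J = Z *m P *m J + 'i *: (Z *m B *m P).
  rewrite /Q /next_Pi mulmxDr mulmxDl -scalemxAr -scalemxAl !mulmxA.
  by rewrite -(mulmxA _ J J) mulJJ mulmx1.
have QA : adj Q *m adj A = adj P *m adj A - 'i *: (J *m adj P).
  rewrite /Q /next_Pi adjD adjZ !adjM adjJ conjCi mulmxDl -scalemxAl -!mulmxA.
  by rewrite mulmx_adjBA mulmx1 scaleNr.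
have JQ : J *m adj Q = J *m adj P - 'i *: (adj P *m adj B).
  rewrite /Q /next_Pi adjD adjZ !adjM adjJ conjCi mulmxDr -scalemxAr !mulmxA.
  by rewrite mulJJ mul1mx scaleNr.
clearbody Q.
have splitG : G *m J *m G =
    adj P *m (X *m P *m J *m adj P *m X) *m P - adj P *m (X *m P *m J *m adj Q *m Y) *m Q
  - adj Q *m (Y *m Q *m J *m adj P *m X) *m P + adj Q *m (Y *m Q *m J *m adj Q *m Y) *m Q.
  by rewrite /G; mx_expand; mx_linear.
rewrite splitG idX idY idXY idYX /G.
mx_expand; rewrite !AQ !QJ !QA !JQ.
by mx_expand; mx_linear.
Qed.

Lemma next_C_herm_J_unitary S P :
  adj S = S -> S \in unitmx -> next_S S P \in unitmx -> op_identity A J S P ->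
  let Ck := 1%:M + adj P *m invmx S *m P
            - adj (next_Pi P) *m invmx (next_S S P) *m next_Pi P in
  adj Ck = Ck /\ Ck *m J *m Ck = J.
Proof.
move=> adjS uS uS' opS Ck.
have adjX : adj (invmx S) = invmx S by rewrite adj_invmx adjS.
have adjY : adj (invmx (next_S S P)) = invmx (next_S S P).
  by rewrite adj_invmx adj_next_S.
split; first by rewrite /Ck !adjB adjD adj1 !adjM !adjK adjX adjY !mulmxA.
have GJG := J_step_quadratic adjX adjY (sandwich_invmx uS uS opS)
  (sandwich_invmx uS' uS' (op_identity_next opS))
  (sandwich_invmx uS uS' (op_identity_mixed opS)).
by rewrite /Ck -addrA J_unitary_1D.
Qed.

End Step.

Section Recursion.

Variables (C : numClosedFieldType) (n p : nat) (A S0 : 'M[C]_n) (Pi0 : 'M[C]_(n, p + p)).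
Hypothesis unitA : A \in unitmx.

Lemma Pi_seq_succ k :
  Pi_seq A Pi0 k.+1 = next_Pi (invmx A) (Jmx p) (Pi_seq A Pi0 k).
Proof. by []. Qed.

Lemma S_seq_succ k :
  S_seq A S0 Pi0 k.+1 = next_S (invmx A) (S_seq A S0 Pi0 k) (Pi_seq A Pi0 k).
Proof. by rewrite /= /next_S adj_invmx. Qed.

Lemma S_seq_invariant :
  adj S0 = S0 -> op_identity A (Jmx p) S0 Pi0 ->
  forall k, adj (S_seq A S0 Pi0 k) = S_seq A S0 Pi0 k /\
            op_identity A (Jmx p) (S_seq A S0 Pi0 k) (Pi_seq A Pi0 k).
Proof.
move=> adjS0 opS0; elim=> [|k [adjS opS]] //; rewrite S_seq_succ; split.
  exact: adj_next_S.
by apply: op_identity_next; rewrite ?mulmxV ?mulVmx ?adj_Jmx ?mulmx_Jmx.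
Qed.

End Recursion.

Local Open Scope complex_scope.

Theorem proposition2p3 (R : realType) (p n N : nat) (hp : (1 <= p)%N) (hn : (0 < n)%N)
  (A S0 : 'M[R[i]]_n) (Pi0 : 'M[R[i]]_(n, p + p)) :
  \det A != 0 ->
  adj S0 = S0 ->
  A *m S0 - S0 *m adj A = 'i *: (Pi0 *m Jmx p *m adj Pi0) ->
  (forall r, (r <= N)%N -> \det (S_seq A S0 Pi0 r) != 0) ->
  forall k, (k < N)%N ->
    adj (C_mx A S0 Pi0 k) = C_mx A S0 Pi0 k /\
    C_mx A S0 Pi0 k *m Jmx p *m C_mx A S0 Pi0 k = Jmx p.
Proof.
move=> detA adjS0 opS0 detS k ltkN.
have unitA : A \in unitmx by rewrite unitmxE unitfE.
have unitS r : (r <= N)%N -> S_seq A S0 Pi0 r \in unitmx.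
  by move=> leNr; rewrite unitmxE unitfE detS.
have [adjS opS] := S_seq_invariant unitA adjS0 opS0 k.
have := unitS k.+1 ltkN; rewrite S_seq_succ => unitS'.
have := next_C_herm_J_unitary (mulmxV unitA) (mulVmx unitA) (adj_Jmx _ p)
  (mulmx_Jmx _ p) adjS (unitS k (ltnW ltkN)) unitS' opS.
by rewrite /C_mx S_seq_succ Pi_seq_succ.
Qed.
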